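(* Let $G=(V,E)$ be a finite directed acyclic graph, $G'=(V,E')$ its minimum equivalent graph, $S$ a set of streams, and $f:V\to S$ a stream assignment satisfying maximum logical concurrency on $G$. Then $\mathrm{min}_{sync}(G,f)=\mathrm{min}_{sync}(G',f)$.
   Context: A path from $u$ to $v$ in a directed graph is a nonempty sequence of edges $(u,w_1),\dots,(w_k,v)$ of that graph. The minimum equivalent graph (MEG) of a finite DAG $G=(V,E)$ is the subgraph $G'=(V,E')$, $E'\subseteq E$, with the same vertex set and the smallest number of edges among subgraphs having the same reachability relation as $G$. A stream assignment is any function $f:V\to S$. It satisfies maximum logical concurrency on a graph $H$ with vertex set $V$ if for all distinct $u,v$ with no path between them in either direction in $H$, $f(u)\neq f(v)$. For a directed graph $H=(V,E_H)$, a synchronization plan $\Lambda\subseteq E_H$ is safe for $f$ on $H$ if for every edge $(u,v)\in E_H$, either $f(u)=f(v)$ or there is a path $P\subseteq E_H$ from $u$ to $v$ with $P\cap\Lambda\neq\emptyset$. Define $\mathrm{min}_{sync}(H,f)=\min\{|\Lambda| : \Lambda\subseteq E_H \text{ is safe for } f \text{ on } H\}$. *)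

From mathcomp Require Import all_boot.
Set Implicit Arguments. Unset Strict Implicit. Unset Printing Implicit Defensive.

Definition erel (V : finType) (E : {set V * V}) : rel V := fun u v => (u, v) \in E.

(* There is a (nonempty) path from u to v using edges of E. *)
Definition path_in (V : finType) (E : {set V * V}) (u v : V) : bool :=
  [exists w, ((u, w) \in E) && connect (erel E) w v].

Definition acyclic (V : finType) (E : {set V * V}) : Prop :=
  forall v, ~~ path_in E v v.

Definition same_reach (V : finType) (E1 E2 : {set V * V}) : Prop :=
  forall u v, path_in E1 u v = path_in E2 u v.

Definition is_MEG (V : finType) (E E' : {set V * V}) : Prop :=
  [/\ E' \subset E, same_reach E E' &
      forall E'' : {set V * V}, E'' \subset E -> same_reach E E'' -> #|E'| <= #|E''| ].

Definition max_logical_concurrency (V : finType) (S : Type) (E : {set V * V})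
  (f : V -> S) : Prop :=
  forall u v, u <> v -> ~~ path_in E u v -> ~~ path_in E v u -> f u <> f v.

Definition safe (V : finType) (S : eqType) (E : {set V * V}) (f : V -> S)
  (L : {set V * V}) : bool :=
  (L \subset E) &&
  [forall e in E, (f e.1 == f e.2) ||
     [exists w in L, connect (erel E) e.1 w.1 && connect (erel E) w.2 e.2]].

(* min_sync(H,f); E itself is always safe, so #|E| is an attained upper bound *)
Definition min_sync (V : finType) (S : eqType) (E : {set V * V}) (f : V -> S) : nat :=
  \big[minn/#|E|]_(L : {set V * V} | safe E f L) #|L|.

From mathcomp Require Import all_boot.
Set Implicit Arguments. Unset Strict Implicit. Unset Printing Implicit Defensive.

(* A minimum equivalent graph E' of E has the same reachability
   relation as E, and the two notions of safety transfer between them: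
   - every plan safe on E' is safe on E: each edge of E is a walk of E', and
     along a walk whose endpoints carry different streams a safe plan
     supplies a synchronization edge (lemma safe_walk);
   - if Lambda is safe on E then Lambda :&: E' is safe on E': an edge (u,v)
     of E' is irredundant, since an intermediate vertex u ->+ x ->+ v would
     (by acyclicity) let us delete (u,v) without changing reachability,
     contradicting minimality; so the only path u ->* w1 -> w2 ->* v through
     an edge (w1,w2) is the edge (u,v) itself, which then lies in Lambda.
   Hence min_sync E f <= min_sync E' f and conversely. *)

Section Reachability.
Variable V : finType.
Implicit Types (H K : {set V * V}) (a b c u v x y : V).

Lemma path_in_connect_trans H a b c :
  path_in H a b -> connect (erel H) b c -> path_in H a c.
Proof.
case/existsP=> t /andP[hat htb] hbc; apply/existsP; exists t.
by rewrite hat (connect_trans htb hbc).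
Qed.

Lemma path_in_connect H a b : path_in H a b -> connect (erel H) a b.
Proof.
case/existsP=> t /andP[hat htb]; apply: connect_trans htb.
exact: connect1.
Qed.

Lemma connectE H a b : connect (erel H) a b = (a == b) || path_in H a b.
Proof.
apply/idP/orP=> [|[/eqP-> //|]]; last exact: path_in_connect.
case/connectP=> [[|t p]] /= => [_ ->|/andP[hat hp] ->]; first by left.
by right; apply/existsP; exists t; apply/andP; split=> //; apply/connectP; exists p.
Qed.

Lemma connect_path_in_trans H a b c :
  connect (erel H) a b -> path_in H b c -> path_in H a c.
Proof.
rewrite connectE => /orP[/eqP-> //|hab hbc].
exact: path_in_connect_trans hab (path_in_connect hbc).
Qed.

Lemma same_reach_connect H K a b :
  same_reach H K -> connect (erel H) a b = connect (erel K) a b.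
Proof. by move=> hHK; rewrite !connectE hHK. Qed.

Lemma same_reach_acyclic H K : same_reach H K -> acyclic H -> acyclic K.
Proof. by move=> hHK acyH a; rewrite -hHK. Qed.

Lemma connect_setD1 H u v a b :
  connect (erel H) a b -> ~~ connect (erel H) a u ->
  connect (erel (H :\ (u, v))) a b.
Proof.
case/connectP=> p; elim: p a => [|t p IH] a /= => [_ -> //|].
case/andP=> hat hp hb nau.
have ntu : ~~ connect (erel H) t u.
  by apply: contra nau; apply: connect_trans; apply: connect1.
apply: (connect_trans (y := t)); last exact: IH.
apply: connect1; rewrite /erel in_setD1; apply/andP; split=> //.
by apply: contra nau => /eqP[-> _].
Qed.

Lemma bypass_redundant_edge H u v x :
  acyclic H -> path_in H u x -> path_in H x v -> path_in (H :\ (u, v)) u v.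
Proof.
move=> acyH /existsP[y /andP[huy hyx]] hxv.
have hyv : connect (erel H) y v.
  exact: connect_trans hyx (path_in_connect hxv).
have nyv : y != v.
  apply: contraNneq (acyH v) => eyv.
  by apply: connect_path_in_trans hxv; rewrite -eyv.
have nyu : ~~ connect (erel H) y u.
  by apply: contraNN (acyH u) => hyu; apply/existsP; exists y; apply/andP.
apply/existsP; exists y; rewrite (connect_setD1 v hyv nyu) andbT in_setD1.
by apply/andP; split=> //; apply: contra nyv => /eqP[->].
Qed.

Lemma path_in_subset H K a b : H \subset K -> path_in H a b -> path_in K a b.
Proof.
move=> sHK /existsP[t /andP[hat htb]]; apply/existsP; exists t.
rewrite (subsetP sHK _ hat) /=; apply: connect_sub htb => c d hcd.
by apply: connect1; rewrite /erel (subsetP sHK _ hcd).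
Qed.

Lemma same_reach_setD1 H u v :
  path_in (H :\ (u, v)) u v -> same_reach H (H :\ (u, v)).
Proof.
move=> alt a b; apply/idP/idP; last exact/path_in_subset/subD1set.
case/existsP=> t /andP[hat htb].
have conn : connect (erel (H :\ (u, v))) t b.
  apply: connect_sub htb => c d hcd; case: (eqVneq (c, d) (u, v)) => [[-> ->]|ncd].
    exact: path_in_connect.
  by apply: connect1; rewrite /erel in_setD1 ncd.
case: (eqVneq (a, t) (u, v)) => [[-> et]|nat].
  by rewrite et in conn; exact: path_in_connect_trans alt conn.
by apply/existsP; exists t; rewrite in_setD1 nat hat.
Qed.

End Reachability.

Section MinimumEquivalentGraph.
Variable V : finType.
Implicit Types (E H : {set V * V}) (a b u v : V).

Lemma MEG_edge_irredundant E (E' : {set V * V}) u v :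
  is_MEG E E' -> (u, v) \in E' -> ~~ path_in (E' :\ (u, v)) u v.
Proof.
case=> sE'E hEE' minE' huv; apply/negP=> alt.
have hEE'' : same_reach E (E' :\ (u, v)).
  by move=> a b; rewrite hEE' (same_reach_setD1 alt).
have := minE' _ (subset_trans (subD1set _ _) sE'E) hEE''.
by rewrite (cardsD1 (u, v) E') huv ltnn.
Qed.

Lemma intermediate_vertex H u v a b :
  connect (erel H) u a -> path_in H a b -> connect (erel H) b v ->
  (a, b) != (u, v) -> exists2 x, path_in H u x & path_in H x v.
Proof.
move=> hua hab hbv nab; case: (eqVneq u a) => [eua|nua].
  exists b; first by rewrite eua.
  move: hbv; rewrite connectE => /orP[/eqP ebv|//].
  by move: nab; rewrite eua ebv eqxx.
exists a; last exact: path_in_connect_trans hab hbv.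
by move: hua; rewrite connectE (negPf nua).
Qed.

Lemma MEG_edge_unique_path E (E' : {set V * V}) u v a b :
  acyclic E -> is_MEG E E' -> (u, v) \in E' ->
  connect (erel E) u a -> (a, b) \in E -> connect (erel E) b v -> (a, b) = (u, v).
Proof.
move=> acyE megE' huv hua hab hbv; have [_ hEE' _] := megE'.
apply/eqP; apply: contraNT (MEG_edge_irredundant megE' huv) => nab.
have hab' : path_in E a b by apply/existsP; exists b; rewrite hab connect0.
rewrite !(same_reach_connect _ _ hEE') hEE' in hua hbv hab'.
have [x hux hxv] := intermediate_vertex hua hab' hbv nab.
exact: bypass_redundant_edge (same_reach_acyclic hEE' acyE) hux hxv.
Qed.

End MinimumEquivalentGraph.

Section Safety.
Variables (V : finType) (S : eqType) (f : V -> S).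
Implicit Types (E H K L : {set V * V}) (x y : V).

Lemma safeP H L :
  reflect (L \subset H /\ forall e, e \in H -> f e.1 != f e.2 ->
             exists2 w, w \in L & connect (erel H) e.1 w.1 && connect (erel H) w.2 e.2)
          (safe H f L).
Proof.
apply: (iffP andP) => [[sLH /forall_inP cov]|[sLH cov]]; split=> //.
  by move=> e he hne; have := cov e he; rewrite (negPf hne) => /exists_inP.
apply/forall_inP=> e he; case: eqVneq => //= hne.
by apply/exists_inP; apply: cov.
Qed.

Lemma safe_walk H L x y : safe H f L -> connect (erel H) x y -> f x != f y ->
  exists2 w, w \in L & connect (erel H) x w.1 && connect (erel H) w.2 y.
Proof.
case/safeP=> _ cov /connectP[p].
elim: p x => [|z p IH] x /= => [_ -> |]; first by rewrite eqxx.
case/andP=> hxz hp hy hne; have hzy : connect (erel H) z y by apply/connectP; exists p.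
case: (eqVneq (f x) (f z)) => [fxz|fxz].
  have [|w hw /andP[hzw hwy]] := IH z hp hy; first by rewrite -fxz.
  by exists w; rewrite // hwy andbT (connect_trans (connect1 hxz) hzw).
have [w hw /andP[hxw hwz]] := cov (x, z) hxz fxz.
by exists w; rewrite // hxw (connect_trans hwz hzy).
Qed.

Lemma safe_supergraph H K L :
  K \subset H -> same_reach H K -> safe K f L -> safe H f L.
Proof.
move=> sKH hHK hL; have /safeP[sLK _] := hL.
apply/safeP; split; first exact: subset_trans sLK sKH.
case=> a b hab /= hne; have hab' : connect (erel K) a b.
  by rewrite -(same_reach_connect _ _ hHK); apply: connect1.
have [w hw] := safe_walk hL hab' hne.
by exists w; rewrite // !(same_reach_connect _ _ hHK).
Qed.

Lemma safe_restrict_MEG E (E' : {set V * V}) L :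
  acyclic E -> is_MEG E E' -> safe E f L -> safe E' f (L :&: E').
Proof.
move=> acyE megE' /safeP[sLE cov]; have [sE'E hEE' _] := megE'.
apply/safeP; split=> [|[u v] huv /= hne]; first exact: subsetIr.
have [[a b] hab /andP[hua hbv]] := cov (u, v) (subsetP sE'E _ huv) hne.
have [eau ebv] := MEG_edge_unique_path acyE megE' huv hua (subsetP sLE _ hab) hbv.
by exists (u, v); rewrite /= ?connect0 // inE huv andbT -eau -ebv.
Qed.

End Safety.

Section MinSync.
Variables (V : finType) (S : eqType) (f : V -> S).
Implicit Types H L : {set V * V}.

Lemma min_sync_le H L : safe H f L -> min_sync H f <= #|L|.
Proof.
rewrite /min_sync => hL; have : L \in index_enum {set V * V} by rewrite mem_index_enum.
elim: (index_enum _) => [|K s IH] //; rewrite big_cons inE.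
case/orP=> [/eqP <-|hs]; first by rewrite hL geq_minl.
by case: (safe H f K); rewrite ?geq_min IH ?orbT.
Qed.

Lemma min_sync_attained H : exists2 L, safe H f L & min_sync H f = #|L|.
Proof.
rewrite /min_sync; apply: (big_ind (fun n => exists2 L, safe H f L & n = #|L|)).
- exists H => //; apply/safeP; split=> // e he _.
  by exists e; rewrite ?connect0.
- by move=> m n [L1 h1 ->] [L2 h2 ->]; rewrite /minn; case: ltnP; [exists L1|exists L2].
- by move=> L hL; exists L.
Qed.

End MinSync.

Theorem mainTheorem4 (V : finType) (S : eqType) (E E' : {set V * V})
  (f : V -> S) :
  acyclic E -> is_MEG E E' -> max_logical_concurrency E f ->
  min_sync E f = min_sync E' f.
Proof.
move=> acyE megE' _; have [sE'E hEE' _] := megE'.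
apply/eqP; rewrite eqn_leq; apply/andP; split.
- have [L hL ->] := min_sync_attained f E'.
  exact/min_sync_le/(safe_supergraph sE'E hEE').
- have [L hL ->] := min_sync_attained f E.
  apply: leq_trans (min_sync_le (safe_restrict_MEG acyE megE' hL)) _.
  exact/subset_leq_card/subsetIl.
Qed.
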